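(* The group of isometries of $K$ that preserve its tessellation by equilateral triangles is isomorphic to $\mathbb Z/2\mathbb Z\times\mathfrak S_3$.
   Context: Tessellate $\mathbb R^2$ by unit equilateral triangles with vertex set the lattice generated by $(1,0)$ and $(1/2,\sqrt3/2)$. Let $T=\mathbb R^2/\langle (0,\sqrt3),(3,0)\rangle$ with the induced tessellation, and let $K=T/\langle i\rangle$, where $i$ is the fixed-point-free orientation-reversing involution induced by $(x,y)\mapsto(x+3/2,\ \sqrt3/2-y)$. Then $K$ is a flat Klein bottle tessellated by six equilateral triangles of side $1$ (it is the Klein bottle appearing as the cusp cross-section $K\times[0,1]$ of the building block obtained by gluing six ideal hyperbolic rectified $5$-cells). *)

From Stdlib Require Import Relation_Operators.
From HB Require Import structures.
From mathcomp Require Import all_boot all_order all_algebra all_fingroup.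
From mathcomp Require Import boolp classical_sets reals.
Set Implicit Arguments. Unset Strict Implicit. Unset Printing Implicit Defensive.
Import Order.TTheory GRing.Theory Num.Theory.
Local Open Scope ring_scope.
Local Open Scope classical_set_scope.

Definition pt (R : realType) := (R * R)%type.

Definition sqrt3 (R : realType) : R := Num.sqrt 3.

Definition t1 (R : realType) (p : pt R) : pt R := (p.1, p.2 + sqrt3 R).
Definition t2 (R : realType) (p : pt R) : pt R := (p.1 + 3, p.2).
Definition ginv (R : realType) (p : pt R) : pt R :=
  (p.1 + 3 / 2, sqrt3 R / 2 - p.2).

Definition gen_step (R : realType) (p q : pt R) : Prop :=
  q = t1 p \/ q = t2 p \/ q = ginv p.

Definition Kequiv (R : realType) : pt R -> pt R -> Prop :=
  clos_refl_sym_trans (pt R) (@gen_step R).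

Definition Kclass (R : realType) (p : pt R) : set (pt R) := [set q | Kequiv p q].

(* The Klein bottle K = R^2 / Gamma, points are equivalence classes. *)
Definition Kpt (R : realType) := {S : set (pt R) | exists p, S = Kclass p}.

Definition proj (R : realType) (p : pt R) : Kpt R :=
  exist _ (Kclass p) (ex_intro _ p erefl).

Definition dist2 (R : realType) (p q : pt R) : R :=
  Num.sqrt ((p.1 - q.1) ^+ 2 + (p.2 - q.2) ^+ 2).

Definition distK (R : realType) (a b : Kpt R) : R :=
  inf [set d | exists p q, sval a p /\ sval b q /\ d = dist2 p q].

Definition isometryK (R : realType) (F : Kpt R -> Kpt R) : Prop :=
  bijective F /\ forall a b, distK (F a) (F b) = distK a b.

(* Closed triangles of the tessellation of R^2 by unit equilateral triangles
   with vertex lattice generated by e1 = (1,0), e2 = (1/2, sqrt3/2). *)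
Definition lat (R : realType) (a b : int) : pt R :=
  (a%:~R + b%:~R / 2, b%:~R * sqrt3 R / 2).

Definition up_tri (R : realType) (a b : int) : set (pt R) :=
  [set p | exists s t : R, 0 <= s /\ 0 <= t /\ s + t <= 1 /\
     p = ((@lat R a b).1 + s + t / 2, (@lat R a b).2 + t * sqrt3 R / 2)].

Definition down_tri (R : realType) (a b : int) : set (pt R) :=
  [set p | exists s t : R, 0 <= s /\ 0 <= t /\ s + t <= 1 /\
     p = ((@lat R a b).1 + 3 / 2 - s - t / 2,
          (@lat R a b).2 + sqrt3 R / 2 - t * sqrt3 R / 2)].

Definition tileR2 (R : realType) (D : set (pt R)) : Prop :=
  exists a b : int, D = @up_tri R a b \/ D = @down_tri R a b.

Definition tileK (R : realType) (X : set (Kpt R)) : Prop :=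
  exists D, tileR2 D /\ X = (@proj R) @` D.

Definition tess_isometry (R : realType) (F : Kpt R -> Kpt R) : Prop :=
  isometryK F /\ forall X, tileK X -> tileK (F @` X).

From Stdlib Require Import Relation_Operators.
From HB Require Import structures.
From mathcomp Require Import all_boot all_order all_algebra all_fingroup.
From mathcomp Require Import boolp classical_sets reals.
From mathcomp Require Import ring lra zify.
Set Implicit Arguments. Unset Strict Implicit. Unset Printing Implicit Defensive.
Import Order.TTheory GRing.Theory Num.Theory.
Local Open Scope ring_scope.
Local Open Scope classical_set_scope.

(* In the lattice coordinates (u, v) of u (1, 0) + v (1/2, sqrt3/2), the deck
   group acts by integral affine maps and the squared distance is
   u^2 + u v + v^2.  The tessellation of K has six triangles, nine edges and
   three vertices, the vertex under the lattice point (u, v) being u - v mod 3.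
   A point of a triangle is determined by its distances to the three vertices,
   and the midpoint of an edge by its distance 1/2 to the two endpoints.  Hence
   a tessellation-preserving isometry is determined by the permutation pi it
   induces on the vertices together with the image of one triangle, and since it
   respects adjacency across edges, that image takes one of only two values for
   each pi.  All twelve possibilities are realized by affine maps
   (u, v) |-> +-(u, v) + (j, n) normalizing the deck group, and they compose
   like Z/2 x S_3. *)

Ltac push_intr := rewrite ?(intrD, intrB, intrN, intrM).
Ltac field_nat := field; rewrite ?pnatr_eq0 //.

Lemma iota_allP n (P : pred nat) :
  reflect (forall i, (i < n)%N -> P i) (all P (iota 0 n)).
Proof.
apply: (iffP allP) => H i; last by rewrite mem_iota => /H.
by move=> lt_in; apply: H; rewrite mem_iota.
Qed.

Lemma iota_all2 m n (P : nat -> nat -> bool) :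
  all (fun i => all (P i) (iota 0 n)) (iota 0 m) ->
  forall i j, (i < m)%N -> (j < n)%N -> P i j.
Proof. by move=> /iota_allP H i j /H /iota_allP; apply. Qed.

Lemma ltn_inj_surj (n : nat) (f : nat -> nat) : (forall i, (i < n)%N -> (f i < n)%N) ->
  (forall i j, (i < n)%N -> (j < n)%N -> f i = f j -> i = j) ->
  forall j, (j < n)%N -> exists2 i, (i < n)%N & f i = j.
Proof.
move=> hf hinj j hj.
have U : uniq (map f (iota 0 n)).
  by rewrite map_inj_in_uniq ?iota_uniq // => x y; rewrite !mem_iota => hx hy; apply: hinj.
have S : {subset map f (iota 0 n) <= iota 0 n}.
  by move=> x /mapP [y]; rewrite !mem_iota => hy ->; apply: hf.
have [_ E] := uniq_min_size U S (eq_leq (esym (size_map f _))).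
have : j \in map f (iota 0 n) by rewrite E mem_iota.
by case/mapP => i; rewrite mem_iota => hi ->; exists i.
Qed.

Section Klein.
Variable R : realType.
Local Notation s := (sqrt3 R).
Local Notation pt := (pt R).
Implicit Types (p q r : pt) (F : Kpt R -> Kpt R).

Lemma sqrt3_gt0 : 0 < s.
Proof. by rewrite /sqrt3 sqrtr_gt0 ltr0n. Qed.

Lemma sqrt3_neq0 : s != 0.
Proof. by rewrite gt_eqF // sqrt3_gt0. Qed.

Lemma sqrt3_sqr : s * s = 3.
Proof. by rewrite -expr2 /sqrt3 sqr_sqrtr // ler0n. Qed.

(** * Lattice coordinates *)

Definition lpt (u v : R) : pt := (u + v / 2, v * s / 2).
Definition ucoord p : R := p.1 - p.2 / s.
Definition vcoord p : R := 2 * p.2 / s.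

Lemma lptK p : lpt (ucoord p) (vcoord p) = p.
Proof.
case: p => x y; rewrite /lpt /ucoord /vcoord /=; have := sqrt3_neq0 => hs.
by congr pair; field.
Qed.

Lemma lpt_inj u v u' v' : lpt u v = lpt u' v' -> u = u' /\ v = v'.
Proof.
case=> h1 h2; have hs := sqrt3_gt0.
have hv : v = v'.
  have : (v - v') * s = 0 by lra.
  by move/eqP; rewrite mulf_eq0 (gt_eqF hs) orbF subr_eq0 => /eqP.
by subst v'; split => //; lra.
Qed.

Lemma ucoord_lpt u v : ucoord (lpt u v) = u.
Proof. by have [] := lpt_inj (lptK (lpt u v)). Qed.

Lemma vcoord_lpt u v : vcoord (lpt u v) = v.
Proof. by have [] := lpt_inj (lptK (lpt u v)). Qed.

Definition qf (x y : R) := x * x + x * y + y * y.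

Lemma qf_ge0 x y : 0 <= qf x y.
Proof. rewrite /qf; nra. Qed.

Lemma dist2_lpt u v u' v' :
  dist2 (lpt u v) (lpt u' v') = Num.sqrt (qf (u - u') (v - v')).
Proof.
rewrite /dist2 /lpt /qf /=; congr Num.sqrt; rewrite !expr2.
have -> : (v * s / 2 - v' * s / 2) * (v * s / 2 - v' * s / 2)
          = (v - v') * (v - v') * (s * s) / 4 by field_nat.
by rewrite sqrt3_sqr; field_nat.
Qed.

(** * The deck group *)

(* Every element of the deck group is [deck e a b]: a translation by
   [(3 b, a sqrt3)], preceded by the glide reflection [ginv] when [e]. *)
Definition deck (e : bool) (a b : int) p : pt :=
  if e then (p.1 + 3 / 2 + 3 * b%:~R, s / 2 - p.2 + a%:~R * s)
  else (p.1 + 3 * b%:~R, p.2 + a%:~R * s).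

Lemma deckF_lpt a b u v :
  deck false a b (lpt u v) = lpt (u + 3 * b%:~R - a%:~R) (v + 2 * a%:~R).
Proof. by rewrite /deck /lpt /=; congr pair; field_nat. Qed.

Lemma deckT_lpt a b u v :
  deck true a b (lpt u v) = lpt (u + v + 1 + 3 * b%:~R - a%:~R) (1 - v + 2 * a%:~R).
Proof. by rewrite /deck /lpt /=; congr pair; field_nat. Qed.

Lemma dist2_deck e a b p q : dist2 (deck e a b p) (deck e a b q) = dist2 p q.
Proof. by rewrite /dist2 /deck; case: e => /=; congr Num.sqrt; ring. Qed.

Definition deck_orbit p q := exists e a b, q = deck e a b p.

Lemma deck_orbit_refl p : deck_orbit p p.
Proof.
by exists false, 0, 0; case: p => x y; rewrite /deck /=; congr pair; rewrite mulr0z; lra.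
Qed.

Lemma deck_orbit_sym p q : deck_orbit p q -> deck_orbit q p.
Proof.
case=> [[] [a [b ->]]]; case: p => x y.
- by exists true, a, (- b - 1); rewrite /deck /=; push_intr; congr pair; field_nat.
- by exists false, (- a), (- b); rewrite /deck /=; push_intr; congr pair; field_nat.
Qed.

Lemma deck_orbit_trans p q r : deck_orbit p q -> deck_orbit q r -> deck_orbit p r.
Proof.
case=> [e1 [a1 [b1 ->]]] [e2 [a2 [b2 ->]]].
case: p => x y; case: e1; case: e2; rewrite /deck /=.
- by exists false, (a2 - a1), (b1 + b2 + 1); rewrite /=; push_intr; congr pair; field_nat.
- by exists true, (a1 + a2), (b1 + b2); rewrite /=; push_intr; congr pair; field_nat.
- by exists true, (a2 - a1), (b1 + b2); rewrite /=; push_intr; congr pair; field_nat.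
- by exists false, (a1 + a2), (b1 + b2); rewrite /=; push_intr; congr pair; field_nat.
Qed.

Lemma Kequiv_deck_orbit p q : Kequiv p q -> deck_orbit p q.
Proof.
elim=> {p q} [p q [->|[->|->]] | p | p q _ | p q r _ IH1 _ IH2].
- by exists false, 1, 0; rewrite /deck /t1; congr pair; rewrite ?mulr0z ?mulr1z; lra.
- by exists false, 0, 1; rewrite /deck /t2; congr pair; rewrite ?mulr0z ?mulr1z; lra.
- by exists true, 0, 0; rewrite /deck /ginv; congr pair; rewrite ?mulr0z; lra.
- exact: deck_orbit_refl.
- exact: deck_orbit_sym.
- exact: deck_orbit_trans IH2.
Qed.

Definition translate (x y : R) p : pt := (p.1 + x, p.2 + y).

Lemma Kequiv_translate_int (x y : R) : (forall p, Kequiv p (translate x y p)) ->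
  forall (n : int) p, Kequiv p (translate (n%:~R * x) (n%:~R * y) p).
Proof.
move=> H.
have Hn (n : nat) p : Kequiv p (translate (n%:R * x) (n%:R * y) p).
  elim: n p => [|n IH] p.
    have -> : translate (0%:R * x) (0%:R * y) p = p.
      by case: p => a b; rewrite /translate /= !mul0r !addr0.
    exact: rst_refl.
  apply: rst_trans (IH p) _.
  have -> : translate (n.+1%:R * x) (n.+1%:R * y) p
            = translate x y (translate (n%:R * x) (n%:R * y) p).
    by case: p => a b; rewrite /translate /= -addn1 !natrD !mulrDl !mul1r; congr pair; ring.
  exact: H.
case=> n p; first exact: Hn.
have E : p = translate (n.+1%:R * x) (n.+1%:R * y)
               (translate ((Negz n)%:~R * x) ((Negz n)%:~R * y) p).
  by case: p => a b; rewrite /translate /= NegzE mulrNz /=; congr pair; ring.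
by apply: rst_sym; have := Hn n.+1 (translate ((Negz n)%:~R * x) ((Negz n)%:~R * y) p); rewrite -E.
Qed.

Lemma Kequiv_deck e a b p : Kequiv p (deck e a b p).
Proof.
have Ht1 q : Kequiv q (translate 0 s q).
  by apply: rst_step; left; rewrite /t1 /translate; case: q => ? ? /=; congr pair; lra.
have Ht2 q : Kequiv q (translate 3 0 q).
  by apply: rst_step; right; left; rewrite /t2 /translate; case: q => ? ? /=; congr pair; lra.
have Htr q : Kequiv q (deck false a b q).
  apply: rst_trans (Kequiv_translate_int Ht1 a q) _.
  have -> : deck false a b q = translate (b%:~R * 3) (b%:~R * 0) (translate (a%:~R * 0) (a%:~R * s) q).
    by case: q => ? ?; rewrite /deck /translate /=; congr pair; ring.
  exact: Kequiv_translate_int.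
case: e; last exact: Htr.
apply: rst_trans (_ : Kequiv p (ginv p)) _; first by apply: rst_step; right; right.
have -> : deck true a b p = deck false a b (ginv p).
  by case: p => ? ?; rewrite /deck /ginv /=; congr pair; ring.
exact: Htr.
Qed.

Lemma KequivE p q : Kequiv p q <-> deck_orbit p q.
Proof.
split; first exact: Kequiv_deck_orbit.
by case=> [e [a [b ->]]]; apply: Kequiv_deck.
Qed.

Lemma Kequiv_sym p q : Kequiv p q -> Kequiv q p.
Proof. exact: rst_sym. Qed.

Lemma Kequiv_trans p q r : Kequiv p q -> Kequiv q r -> Kequiv p r.
Proof. exact: rst_trans. Qed.

Lemma projP p q : proj p = proj q <-> Kequiv p q.
Proof.
split.
- move=> /(congr1 sval) /= E.
  have : Kclass q q by exact: rst_refl.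
  by rewrite -E.
- move=> H; apply: eq_sig_hprop => /=; first by move=> ? ? ?; apply: Prop_irrelevance.
  rewrite /Kclass; apply/seteqP; split => r /=.
  + by move=> h; apply: Kequiv_trans (Kequiv_sym H) h.
  + exact: Kequiv_trans.
Qed.

Lemma proj_surj (z : Kpt R) : exists p, z = proj p.
Proof. by case: z => S [p E]; exists p; apply: eq_sig_hprop. Qed.

Lemma distK_proj_min p q m :
  (forall q', Kequiv q q' -> m <= dist2 p q') ->
  (exists2 q0, Kequiv q q0 & dist2 p q0 = m) ->
  distK (proj p) (proj q) = m.
Proof.
move=> Hlb [q0 Hq0 Hm]; rewrite /distK /=.
set S := (X in inf X).
have lbS : lbound S m.
  move=> d [p' [q' [/= Hp [Hq ->]]]].
  have /KequivE [e [a [b Ep]]] := Kequiv_sym Hp.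
  rewrite -(dist2_deck e a b) -Ep; apply: Hlb.
  exact: Kequiv_trans Hq (Kequiv_deck _ _ _ _).
have Sm : S m by exists p, q0; split; [exact: rst_refl | split].
apply/eqP; rewrite eq_le; apply/andP; split.
- by apply: ge_inf => //; exists m.
- by apply: lb_le_inf => //; exists m.
Qed.

(* All the special points (vertices, edge midpoints) have coordinates in Z/6,
   where deck equivalence becomes decidable. *)
Definition sixth (m n : int) : pt := lpt (m%:~R / 6) (n%:~R / 6).

Definition same_sixth (m n m' n' : int) : bool :=
  ((12 %| n' - n)%Z && (36 %| 2 * (m' - m) + (n' - n))%Z) ||
  ((12 %| n' + n - 6)%Z && (36 %| 2 * (m' - m) - n + n' - 18)%Z).

Lemma proj_sixthP m n m' n' :
  proj (sixth m n) = proj (sixth m' n') <-> same_sixth m n m' n'.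
Proof.
rewrite projP KequivE /same_sixth; split.
- case=> [[] [a [b]]]; rewrite /sixth ?deckF_lpt ?deckT_lpt => /lpt_inj [h1 h2].
  + have e1 : m' = m + n + 6 + 18 * b - 6 * a by apply: (@intr_inj R); push_intr; lra.
    have e2 : n' = 6 - n + 12 * a by apply: (@intr_inj R); push_intr; lra.
    by apply/orP; right; apply/andP; split; apply/dvdzP; [exists a | exists b]; lia.
  + have e1 : m' = m + 18 * b - 6 * a by apply: (@intr_inj R); push_intr; lra.
    have e2 : n' = n + 12 * a by apply: (@intr_inj R); push_intr; lra.
    by apply/orP; left; apply/andP; split; apply/dvdzP; [exists a | exists b]; lia.
- case/orP => /andP [/dvdzP [a ha] /dvdzP [b hb]].
  + exists false, a, b; rewrite /sixth deckF_lpt; congr lpt.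
    * have -> : m' = m + 18 * b - 6 * a by lia.
      by push_intr; lra.
    * have -> : n' = n + 12 * a by lia.
      by push_intr; lra.
  + exists true, a, b; rewrite /sixth deckT_lpt; congr lpt.
    * have -> : m' = m + n + 6 + 18 * b - 6 * a by lia.
      by push_intr; lra.
    * have -> : n' = 6 - n + 12 * a by lia.
      by push_intr; lra.
Qed.

Lemma lpt_sixth (m n : int) : lpt m%:~R n%:~R = sixth (6 * m) (6 * n).
Proof. by rewrite /sixth; congr lpt; push_intr; field_nat. Qed.

Definition in_up (a b : int) (u v : R) :=
  a%:~R <= u /\ b%:~R <= v /\ u + v <= a%:~R + b%:~R + 1.
Definition in_down (a b : int) (u v : R) :=
  u <= a%:~R + 1 /\ v <= b%:~R + 1 /\ a%:~R + b%:~R + 1 <= u + v.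

Lemma up_tri_lpt a b u v : up_tri a b (lpt u v) <-> in_up a b u v.
Proof.
rewrite /up_tri /in_up /lat /=; split.
- case=> x [y [hx [hy [hxy E]]]].
  have : lpt u v = lpt (a%:~R + x) (b%:~R + y) by rewrite E /lpt; congr pair; field_nat.
  by case/lpt_inj => -> ->; lra.
- case=> h1 [h2 h3]; exists (u - a%:~R), (v - b%:~R); do 3! (split; first lra).
  by rewrite /lpt; congr pair; field_nat.
Qed.

Lemma down_tri_lpt a b u v : down_tri a b (lpt u v) <-> in_down a b u v.
Proof.
rewrite /down_tri /in_down /lat /=; split.
- case=> x [y [hx [hy [hxy E]]]].
  have : lpt u v = lpt (a%:~R + 1 - x) (b%:~R + 1 - y) by rewrite E /lpt; congr pair; field_nat.
  by case/lpt_inj => -> ->; lra.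
- case=> h1 [h2 h3]; exists (a%:~R + 1 - u), (b%:~R + 1 - v); do 3! (split; first lra).
  by rewrite /lpt; congr pair; field_nat.
Qed.

Lemma up_triE a b p : up_tri a b p <-> in_up a b (ucoord p) (vcoord p).
Proof. by rewrite -{1}(lptK p) up_tri_lpt. Qed.

Lemma down_triE a b p : down_tri a b p <-> in_down a b (ucoord p) (vcoord p).
Proof. by rewrite -{1}(lptK p) down_tri_lpt. Qed.

Lemma qf_int_ge1 (x y : int) : x <> 0 \/ y <> 0 -> 1 <= qf x%:~R y%:~R.
Proof.
move=> nz; have -> : qf x%:~R y%:~R = (x * x + x * y + y * y)%:~R by rewrite /qf; push_intr.
rewrite (_ : 1 = 1%:~R :> R) // ler_int.
have E : 4 * (x * x + x * y + y * y) = (2 * x + y) * (2 * x + y) + 3 * (y * y) by ring.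
have : (0 < x \/ x < 0) \/ (0 < y \/ y < 0) by lia.
by case=> [[]|[]] h; nia.
Qed.

(* In the triangle spanned by 0 and the unit lattice vectors [e] and [f], no
   lattice point other than [e] and [f] is closer than [0]: expand
   [qf (X - d)] along the barycentric coordinates of [X]. *)
Lemma qf_corner_le (sg ta X1 X2 : R) (d1 d2 e1 e2 f1 f2 : int) :
  0 <= sg -> 0 <= ta -> sg + ta <= 1 ->
  qf e1%:~R e2%:~R = 1 -> qf f1%:~R f2%:~R = 1 ->
  d1 - e1 <> 0 \/ d2 - e2 <> 0 -> d1 - f1 <> 0 \/ d2 - f2 <> 0 ->
  X1 = sg * e1%:~R + ta * f1%:~R -> X2 = sg * e2%:~R + ta * f2%:~R ->
  qf X1 X2 <= qf (X1 - d1%:~R) (X2 - d2%:~R).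
Proof.
move=> hs ht hst he hf hde hdf -> ->.
have := qf_int_ge1 hde; have := qf_int_ge1 hdf; rewrite !intrB => q2 q1.
have q0 : 0 <= qf d1%:~R d2%:~R := qf_ge0 _ _.
rewrite -subr_ge0.
have -> : qf (sg * e1%:~R + ta * f1%:~R - d1%:~R) (sg * e2%:~R + ta * f2%:~R - d2%:~R)
    - qf (sg * e1%:~R + ta * f1%:~R) (sg * e2%:~R + ta * f2%:~R)
  = (1 - sg - ta) * qf d1%:~R d2%:~R
    + sg * (qf (d1%:~R - e1%:~R) (d2%:~R - e2%:~R) - qf e1%:~R e2%:~R)
    + ta * (qf (d1%:~R - f1%:~R) (d2%:~R - f2%:~R) - qf f1%:~R f2%:~R).
  by rewrite /qf; ring.
by rewrite he hf; apply: addr_ge0; [apply: addr_ge0|]; apply: mulr_ge0; lra.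
Qed.

Lemma Kequiv_lattice (m n : int) q : Kequiv (lpt m%:~R n%:~R) q ->
  exists m' n' : int, q = lpt m'%:~R n'%:~R /\ (3 %| (m' - n') - (m - n))%Z.
Proof.
case/KequivE => [[] [a [b ->]]].
- exists (m + n + 1 + 3 * b - a), (1 - n + 2 * a); split.
  + by rewrite deckT_lpt; congr lpt; push_intr.
  + by apply/dvdzP; exists (n + b - a); lia.
- exists (m + 3 * b - a), (n + 2 * a); split.
  + by rewrite deckF_lpt; congr lpt; push_intr.
  + by apply/dvdzP; exists (b - a); lia.
Qed.

(* The corners of [up_tri a b] have pairwise distinct [u - v] modulo 3, so each
   is the point of its deck orbit nearest to the triangle. *)
Definition tri_corner (a b : int) (d : nat) : int * int :=
  match d with 0%N => (a, b) | 1%N => (a + 1, b) | _ => (a, b + 1) end.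

Lemma qf_corner_nearest (c1 c2 m' n' e1 e2 f1 f2 : int) (u v sg ta : R) :
  0 <= sg -> 0 <= ta -> sg + ta <= 1 ->
  qf e1%:~R e2%:~R = 1 -> qf f1%:~R f2%:~R = 1 ->
  (3 %| (m' - n') - (c1 - c2))%Z -> ~~ (3 %| e1 - e2)%Z -> ~~ (3 %| f1 - f2)%Z ->
  u - c1%:~R = sg * e1%:~R + ta * f1%:~R -> v - c2%:~R = sg * e2%:~R + ta * f2%:~R ->
  qf (u - c1%:~R) (v - c2%:~R) <= qf (u - m'%:~R) (v - n'%:~R).
Proof.
move=> hs ht hst he hf /dvdzP [k hk] he3 hf3 E1 E2.
have -> : u - m'%:~R = (u - c1%:~R) - (m' - c1)%:~R by push_intr; lra.
have -> : v - n'%:~R = (v - c2%:~R) - (n' - c2)%:~R by push_intr; lra.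
apply: (qf_corner_le hs ht hst he hf _ _ E1 E2).
- have [h1|h1] := eqVneq (m' - c1 - e1) 0; last by left; apply/eqP.
  have [h2|h2] := eqVneq (n' - c2 - e2) 0; last by right; apply/eqP.
  by case/negP: he3; apply/dvdzP; exists k; lia.
- have [h1|h1] := eqVneq (m' - c1 - f1) 0; last by left; apply/eqP.
  have [h2|h2] := eqVneq (n' - c2 - f2) 0; last by right; apply/eqP.
  by case/negP: hf3; apply/dvdzP; exists k; lia.
Qed.

Lemma distK_tri_corner (a b : int) (d : nat) (u v : R) : in_up a b u v -> (d < 3)%N ->
  distK (proj (lpt u v)) (proj (lpt (tri_corner a b d).1%:~R (tri_corner a b d).2%:~R)) =
  Num.sqrt (qf (u - (tri_corner a b d).1%:~R) (v - (tri_corner a b d).2%:~R)).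
Proof.
move=> [h1 [h2 h3]]; case: d => [|[|[|//]]] _ /=;
(apply: distK_proj_min; last by eexists; [exact: rst_refl | rewrite dist2_lpt]);
move=> q' /Kequiv_lattice [m' [n' [-> hdiv]]]; rewrite dist2_lpt ler_sqrt; try exact: qf_ge0.
- apply: (@qf_corner_nearest _ _ _ _ 1 0 0 1 u v (u - a%:~R) (v - b%:~R)) => //;
    rewrite /qf ?mulr1z ?mulr0z; lra.
- apply: (@qf_corner_nearest _ _ _ _ (-1) 0 (-1) 1 u v (a%:~R + 1 - u - v + b%:~R) (v - b%:~R)) => //;
    rewrite /qf ?mulrN1z ?mulr1z ?mulr0z; push_intr; lra.
- apply: (@qf_corner_nearest _ _ _ _ 0 (-1) 1 (-1) u v (a%:~R + b%:~R + 1 - u - v) (u - a%:~R)) => //;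
    rewrite /qf ?mulrN1z ?mulr1z ?mulr0z; push_intr; lra.
Qed.

(** * The tiling of [K] *)

Lemma proj_image_eq (D D' : set pt) (f g : pt -> pt) :
  (forall p, D p -> D' (f p)) -> (forall p, D' p -> D (g p)) ->
  (forall p, Kequiv p (f p)) -> (forall p, Kequiv p (g p)) ->
  (@proj R) @` D = (@proj R) @` D'.
Proof.
move=> hf hg kf kg; apply/seteqP; split => z [p hp <-].
- by exists (f p); [apply: hf | apply/projP/Kequiv_sym].
- by exists (g p); [apply: hg | apply/projP/Kequiv_sym].
Qed.

Lemma proj_up_tri_shift a b al be :
  (@proj R) @` up_tri a b = (@proj R) @` up_tri (a + 3 * be - al) (b + 2 * al).
Proof.
apply: (proj_image_eq (f := deck false al be) (g := deck false (- al) (- be))).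
- by move=> p; rewrite -(lptK p) deckF_lpt !up_tri_lpt /in_up; push_intr; lra.
- by move=> p; rewrite -(lptK p) deckF_lpt !up_tri_lpt /in_up; push_intr; lra.
- by move=> p; apply: Kequiv_deck.
- by move=> p; apply: Kequiv_deck.
Qed.

Lemma proj_down_tri_up a b :
  (@proj R) @` down_tri a b = (@proj R) @` up_tri (a + b + 2) (- b).
Proof.
apply: (proj_image_eq (f := deck true 0 0) (g := deck true 0 (-1))).
- by move=> p; rewrite -(lptK p) deckT_lpt down_tri_lpt up_tri_lpt /in_up /in_down; push_intr; lra.
- by move=> p; rewrite -(lptK p) deckT_lpt down_tri_lpt up_tri_lpt /in_up /in_down; push_intr; lra.
- by move=> p; apply: Kequiv_deck.
- by move=> p; apply: Kequiv_deck.
Qed.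

(* The six triangles of [K] are the images of the upward triangles with
   lower-left corner [(a, b)], [0 <= a < 3], [0 <= b < 2], numbered [a + 3 b]. *)
Definition tri_a (i : nat) : int := (i %% 3)%N.
Definition tri_b (i : nat) : int := (i %/ 3)%N.
Definition tri (i : nat) : set (Kpt R) := (@proj R) @` up_tri (tri_a i) (tri_b i).
Definition tri_idx (a b : int) : nat :=
  (absz ((a + (b %/ 2)%Z) %% 3)%Z + 3 * absz (b %% 2)%Z)%N.
Definition dtri_idx (a b : int) : nat := tri_idx (a + b + 2) (- b).

Lemma tri_idx_lt a b : (tri_idx a b < 6)%N.
Proof. rewrite /tri_idx; lia. Qed.

Lemma proj_up_tri a b : (@proj R) @` up_tri a b = tri (tri_idx a b).
Proof.
rewrite (proj_up_tri_shift a b (- (b %/ 2)%Z) (- ((a + (b %/ 2)%Z) %/ 3)%Z)).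
by rewrite /tri /tri_a /tri_b /tri_idx; congr (_ @` up_tri _ _); lia.
Qed.

Lemma proj_down_tri a b : (@proj R) @` down_tri a b = tri (dtri_idx a b).
Proof. by rewrite proj_down_tri_up proj_up_tri. Qed.

Lemma tri_cover p : exists2 i, (i < 6)%N & tri i (proj p).
Proof.
set u := ucoord p; set v := vcoord p; set a := Num.floor u; set b := Num.floor v.
have ha := floor_le u; have hb := floor_le v.
have := floorD1_gt u; have := floorD1_gt v; rewrite !intrD => hb' ha'.
case: (lerP (u + v) (a%:~R + b%:~R + 1)) => h.
- exists (tri_idx a b); first exact: tri_idx_lt.
  by rewrite -proj_up_tri; exists p => //; apply/up_triE; rewrite /in_up -/u -/v; lra.
- exists (dtri_idx a b); first exact: tri_idx_lt.
  by rewrite -proj_down_tri; exists p => //; apply/down_triE; rewrite /in_down -/u -/v; lra.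
Qed.

(* [K] has three vertices; the lattice point [(u, v)] lies over
   [vtx ((u - v) mod 3)]. *)
Definition vtx (k : nat) : Kpt R := proj (sixth (6 * k%:Z) 0).

(* Corner [d] of [tri i], numbered as in [tri_corner], lies over [vtx (vtx_at i d)]. *)
Definition tri_vtx0 (i : nat) : nat := absz ((tri_a i - tri_b i) %% 3)%Z.
Definition corner_of (i k : nat) : nat := ((k + 6 - tri_vtx0 i) %% 3)%N.
Definition vtx_at (i d : nat) : nat := ((d + tri_vtx0 i) %% 3)%N.

Lemma corner_of_lt i k : (corner_of i k < 3)%N.
Proof. by rewrite /corner_of ltn_pmod. Qed.

Lemma vtx_at_lt i d : (vtx_at i d < 3)%N.
Proof. by rewrite /vtx_at ltn_pmod. Qed.

Lemma tri_vtx0_lt i : (tri_vtx0 i < 3)%N.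
Proof. rewrite /tri_vtx0; lia. Qed.

Lemma corner_ofK i k : (k < 3)%N -> vtx_at i (corner_of i k) = k.
Proof. by have := tri_vtx0_lt i; rewrite /vtx_at /corner_of; lia. Qed.

Lemma vtx_atK i d : (d < 3)%N -> corner_of i (vtx_at i d) = d.
Proof. by have := tri_vtx0_lt i; rewrite /vtx_at /corner_of; lia. Qed.

Lemma corner_of_inj i k k' : (k < 3)%N -> (k' < 3)%N -> corner_of i k = corner_of i k' -> k = k'.
Proof. by move=> hk hk' E; rewrite -(corner_ofK i hk) -(corner_ofK i hk') E. Qed.

Definition corner_idx (i k : nat) : int * int := tri_corner (tri_a i) (tri_b i) (corner_of i k).
Definition corner (i k : nat) : pt := lpt (corner_idx i k).1%:~R (corner_idx i k).2%:~R.

(* The edge of [tri i] opposite to [vtx k] has midpoint [edge_mid i k]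
   and separates [tri i] from [tri (adj i k)]. *)
Definition edge_mid_idx (i k : nat) : int * int :=
  let a := tri_a i in let b := tri_b i in
  match corner_of i k with
  | 0%N => (6 * a + 3, 6 * b + 3) | 1%N => (6 * a, 6 * b + 3) | _ => (6 * a + 3, 6 * b) end.
Definition edge_mid (i k : nat) : pt := sixth (edge_mid_idx i k).1 (edge_mid_idx i k).2.
Definition adj (i k : nat) : nat :=
  match k, i with
  | 0, 0 => 2 | 0, 2 => 0 | 0, 1 => 5 | 0, 5 => 1 | 0, 3 => 4 | 0, _ => 3
  | 1, 0 => 1 | 1, 1 => 0 | 1, 2 => 3 | 1, 3 => 2 | 1, 4 => 5 | 1, _ => 4
  | _, 0 => 4 | _, 4 => 0 | _, 1 => 2 | _, 2 => 1 | _, 3 => 5 | _, _ => 3 end%N.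

Fact proj_corner_subproof : all (fun i => all (fun k =>
  same_sixth (6 * (corner_idx i k).1) (6 * (corner_idx i k).2) (6 * k%:Z) 0) (iota 0 3)) (iota 0 6).
Proof. by []. Qed.

Fact edge_mid_adj_subproof : all (fun i => all (fun k =>
  same_sixth (edge_mid_idx i k).1 (edge_mid_idx i k).2
             (edge_mid_idx (adj i k) k).1 (edge_mid_idx (adj i k) k).2) (iota 0 3)) (iota 0 6).
Proof. by []. Qed.

Fact edge_mid_eq_subproof : all (fun i => all (fun j => all (fun k =>
  same_sixth (edge_mid_idx i k).1 (edge_mid_idx i k).2 (edge_mid_idx j k).1 (edge_mid_idx j k).2
  ==> (j == i) || (j == adj i k)) (iota 0 3)) (iota 0 6)) (iota 0 6).
Proof. by []. Qed.

Fact vtx_inj_subproof : all (fun k => all (fun k' =>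
  same_sixth (6 * k%:Z) 0 (6 * k'%:Z) 0 ==> (k == k')) (iota 0 3)) (iota 0 3).
Proof. by []. Qed.

Fact adj_subproof : all (fun i => all (fun k =>
  (adj i k < 6)%N && (adj i k != i)) (iota 0 3)) (iota 0 6).
Proof. by []. Qed.

Lemma adj_lt i k : (i < 6)%N -> (k < 3)%N -> (adj i k < 6)%N.
Proof. by move=> hi hk; have /andP [] := iota_all2 adj_subproof hi hk. Qed.

Lemma adj_neq i k : (i < 6)%N -> (k < 3)%N -> adj i k <> i.
Proof. by move=> hi hk; have /andP [_ /eqP] := iota_all2 adj_subproof hi hk. Qed.

Lemma vtx_inj k k' : (k < 3)%N -> (k' < 3)%N -> vtx k = vtx k' -> k = k'.
Proof.
move=> hk hk' /proj_sixthP H.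
by have := iota_all2 vtx_inj_subproof hk hk'; rewrite H => /eqP.
Qed.

Lemma proj_lpt_vtx (m n : int) k : (k < 3)%N -> (3 %| m - n - k%:Z)%Z ->
  proj (lpt m%:~R n%:~R) = vtx k.
Proof.
move=> hk /dvdzP [r hr]; rewrite lpt_sixth /vtx; apply/proj_sixthP; rewrite /same_sixth.
have [t [ht|ht]] : exists t, n = 2 * t \/ n = 2 * t + 1 by exists (n %/ 2)%Z; lia.
- by apply/orP; left; apply/andP; split; apply/dvdzP; [exists (- t) | exists (- t - r)]; lia.
- by apply/orP; right; apply/andP; split; apply/dvdzP; [exists t | exists (- t - r - 1)]; lia.
Qed.

Lemma vtx_lpt k : (k < 3)%N -> vtx k = proj (lpt (k%:Z)%:~R (0 : int)%:~R).
Proof. by move=> hk; rewrite (proj_lpt_vtx hk) //; apply/dvdzP; exists 0; lia. Qed.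

Lemma corner_in_tri i k : up_tri (tri_a i) (tri_b i) (corner i k).
Proof.
rewrite /corner /corner_idx up_tri_lpt /in_up.
by case: (corner_of i k) (corner_of_lt i k) => [|[|[|//]]] _ /=; push_intr; lra.
Qed.

Lemma proj_corner i k : (i < 6)%N -> (k < 3)%N -> proj (corner i k) = vtx k.
Proof.
move=> hi hk; rewrite /corner lpt_sixth /vtx; apply/proj_sixthP.
by have := iota_all2 proj_corner_subproof hi hk.
Qed.

Lemma tri_vtx i k : (i < 6)%N -> (k < 3)%N -> tri i (vtx k).
Proof. by move=> hi hk; rewrite -(proj_corner hi hk); exists (corner i k); [apply: corner_in_tri|]. Qed.

Lemma distK_vtx i k p : (i < 6)%N -> (k < 3)%N -> up_tri (tri_a i) (tri_b i) p ->
  distK (proj p) (vtx k) = dist2 p (corner i k).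
Proof.
move=> hi hk /up_triE hp; rewrite -(proj_corner hi hk) /corner /corner_idx.
by rewrite -{1 2}(lptK p) dist2_lpt; apply: distK_tri_corner (corner_of_lt i k).
Qed.

Lemma qf_trilateration (x y x' y' a b : R) :
  qf (x - a) (y - b) = qf (x' - a) (y' - b) ->
  qf (x - (a + 1)) (y - b) = qf (x' - (a + 1)) (y' - b) ->
  qf (x - a) (y - (b + 1)) = qf (x' - a) (y' - (b + 1)) -> x = x' /\ y = y'.
Proof. by rewrite /qf => h1 h2 h3; split; nra. Qed.

Lemma tri_eq_distK_vtx i (z1 z2 : Kpt R) : (i < 6)%N -> tri i z1 -> tri i z2 ->
  (forall k, (k < 3)%N -> distK z1 (vtx k) = distK z2 (vtx k)) -> z1 = z2.
Proof.
move=> hi [p1 h1 <-] [p2 h2 <-] H.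
pose c d := tri_corner (tri_a i) (tri_b i) d.
have E d : (d < 3)%N -> qf (ucoord p1 - (c d).1%:~R) (vcoord p1 - (c d).2%:~R)
                      = qf (ucoord p2 - (c d).1%:~R) (vcoord p2 - (c d).2%:~R).
  move=> hd; have := H _ (vtx_at_lt i d).
  rewrite (distK_vtx hi (vtx_at_lt i d) h1) (distK_vtx hi (vtx_at_lt i d) h2).
  rewrite /corner /corner_idx vtx_atK // -{1}(lptK p1) -{1}(lptK p2) !dist2_lpt.
  by move/eqP; rewrite eqr_sqrt ?qf_ge0 // => /eqP.
have := E 0%N erefl; have := E 1%N erefl; have := E 2%N erefl; rewrite /c /= !intrD !mulr1z.
move=> e2 e1 e0; have [E1 E2] := qf_trilateration e0 e1 e2.
by congr proj; rewrite -(lptK p1) -(lptK p2) E1 E2.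
Qed.

Lemma edge_mid_in_tri i k : up_tri (tri_a i) (tri_b i) (edge_mid i k).
Proof.
rewrite /edge_mid /edge_mid_idx /sixth up_tri_lpt /in_up.
by case: (corner_of i k) (corner_of_lt i k) => [|[|[|//]]] _ /=; push_intr; lra.
Qed.

Lemma distK_edge_mid i k k' : (i < 6)%N -> (k < 3)%N -> (k' < 3)%N -> k' <> k ->
  distK (proj (edge_mid i k)) (vtx k') = 1 / 2.
Proof.
move=> hi hk hk' hne; rewrite (distK_vtx hi hk' (edge_mid_in_tri i k)).
have hd : corner_of i k' <> corner_of i k by move/(corner_of_inj hk' hk).
rewrite /edge_mid /edge_mid_idx /corner /corner_idx /sixth dist2_lpt.
move: hd (corner_of_lt i k) (corner_of_lt i k').
case: (corner_of i k) => [|[|[|//]]]; case: (corner_of i k') => [|[|[|//]]] //= _ _ _;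
  rewrite -[1 / 2]ger0_norm ?(@divr_ge0 _ 1) // -sqrtr_sqr; congr Num.sqrt;
  rewrite /qf; push_intr; field_nat.
Qed.

Lemma qf_edge_mid0 (x y a b : R) :
  qf (x - (a + 1)) (y - b) = 1 / 4 -> qf (x - a) (y - (b + 1)) = 1 / 4 ->
  x = a + 1 / 2 /\ y = b + 1 / 2.
Proof.
rewrite /qf => h1 h2; have exy : x - a = y - b by nra.
have : (x - a - 1 / 2) ^+ 2 = 0 by rewrite expr2; nra.
by move/eqP; rewrite sqrf_eq0 subr_eq0 => /eqP hx; split; lra.
Qed.

Lemma qf_edge_mid1 (x y a b : R) :
  qf (x - a) (y - b) = 1 / 4 -> qf (x - a) (y - (b + 1)) = 1 / 4 ->
  x = a /\ y = b + 1 / 2.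
Proof.
rewrite /qf => h1 h2; have exy : x - a = 1 - 2 * (y - b) by nra.
have : (y - b - 1 / 2) ^+ 2 = 0 by rewrite expr2; nra.
by move/eqP; rewrite sqrf_eq0 subr_eq0 => /eqP hy; split; lra.
Qed.

Lemma qf_edge_mid2 (x y a b : R) :
  qf (x - a) (y - b) = 1 / 4 -> qf (x - (a + 1)) (y - b) = 1 / 4 ->
  x = a + 1 / 2 /\ y = b.
Proof.
rewrite /qf => h1 h2; have exy : y - b = 1 - 2 * (x - a) by nra.
have : (x - a - 1 / 2) ^+ 2 = 0 by rewrite expr2; nra.
by move/eqP; rewrite sqrf_eq0 subr_eq0 => /eqP hx; split; lra.
Qed.

Lemma edge_mid_unique i k (z : Kpt R) : (i < 6)%N -> (k < 3)%N -> tri i z ->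
  (forall k', (k' < 3)%N -> k' <> k -> distK z (vtx k') = 1 / 2) ->
  z = proj (edge_mid i k).
Proof.
move=> hi hk [p hp <-] H.
pose c d := tri_corner (tri_a i) (tri_b i) d.
have E d : (d < 3)%N -> d != corner_of i k ->
    qf (ucoord p - (c d).1%:~R) (vcoord p - (c d).2%:~R) = 1 / 4.
  move=> hd /eqP hne; have hd' := vtx_at_lt i d.
  have hne' : vtx_at i d <> k by move=> E; apply: hne; rewrite -E vtx_atK.
  have := H _ hd' hne'; rewrite (distK_vtx hi hd' hp) /corner /corner_idx vtx_atK //.
  rewrite -{1}(lptK p) dist2_lpt => hsq.
  by rewrite -(sqr_sqrtr (qf_ge0 _ _)) hsq; field_nat.
congr proj; rewrite -(lptK p) /edge_mid /edge_mid_idx /sixth.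
move: E; rewrite /c; case: (corner_of i k) (corner_of_lt i k) => [|[|[|//]]] _ E /=.
- have := E 1%N erefl erefl; have := E 2%N erefl erefl; rewrite /= !intrD !mulr1z => e2 e1.
  by have [-> ->] := qf_edge_mid0 e1 e2; congr lpt; push_intr; field_nat.
- have := E 0%N erefl erefl; have := E 2%N erefl erefl; rewrite /= !intrD !mulr1z => e2 e1.
  by have [-> ->] := qf_edge_mid1 e1 e2; congr lpt; push_intr; field_nat.
- have := E 0%N erefl erefl; have := E 1%N erefl erefl; rewrite /= !intrD !mulr1z => e2 e1.
  by have [-> ->] := qf_edge_mid2 e1 e2; congr lpt; push_intr; field_nat.
Qed.

Lemma edge_mid_adj i k : (i < 6)%N -> (k < 3)%N ->
  proj (edge_mid i k) = proj (edge_mid (adj i k) k).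
Proof. by move=> hi hk; apply/proj_sixthP; have := iota_all2 edge_mid_adj_subproof hi hk. Qed.

Lemma edge_mid_eq i j k : (i < 6)%N -> (j < 6)%N -> (k < 3)%N ->
  proj (edge_mid i k) = proj (edge_mid j k) -> j = i \/ j = adj i k.
Proof.
move=> hi hj hk /proj_sixthP H.
have /iota_allP/(_ i hi)/iota_allP/(_ j hj)/iota_allP/(_ k hk) := edge_mid_eq_subproof.
by rewrite H => /orP [] /eqP; [left | right].
Qed.

Lemma tri_inj i j : (i < 6)%N -> (j < 6)%N -> tri i = tri j -> i = j.
Proof.
move=> hi hj E.
have H k : (k < 3)%N -> j = i \/ j = adj i k.
  move=> hk; apply: (edge_mid_eq hi hj hk); apply: edge_mid_unique => //.
  - by rewrite -E; exists (edge_mid i k) => //; apply: edge_mid_in_tri.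
  - by move=> k' hk' hne; apply: distK_edge_mid.
have [|] := H 0%N erefl => // h0; have [|] := H 1%N erefl => // h1.
have : adj i 0 = adj i 1 by rewrite -h0 -h1.
by move: hi; clear; case: i => [|[|[|[|[|[|]]]]]].
Qed.

Lemma tri0_tri3_lattice p q : up_tri 0 0 p -> up_tri 0 1 q -> Kequiv p q ->
  p = lpt 0 0 \/ p = lpt 1 0 \/ p = lpt 0 1.
Proof.
rewrite -(lptK p); set u := ucoord p; set v := vcoord p.
move=> /up_tri_lpt [h1 [h2 h3]] hq /KequivE [[] [al [be Eq]]]; move: hq; rewrite Eq.
- rewrite deckT_lpt up_tri_lpt /in_up => [[k1 [k2 k3]]].
  move: h1 h2 h3; rewrite ?mulr0z => h1 h2 h3.
  set c := - 3 * be - al; set d := 2 * al.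
  have hc : u <= c%:~R by rewrite /c; push_intr; lra.
  have hd : v <= d%:~R by rewrite /d; push_intr; lra.
  have hcd : (c + d - 1)%:~R <= u + v by rewrite /c /d; push_intr; lra.
  have ic : 0 <= c by rewrite -(ler_int R); lra.
  have id : 0 <= d by rewrite -(ler_int R); lra.
  have icd : c + d <= 2 by rewrite -(ler_int R); move: hcd; push_intr; lra.
  have : (d = 0 /\ (c = 0 \/ c = 2)) \/ (d = 2 /\ c = 0) by rewrite /c /d in ic id icd *; lia.
  case=> [[hd0 [hc0|hc0]]|[hd0 hc0]]; move: hc hd hcd; rewrite hd0 hc0 ?intrD ?intrB => hc hd hcd.
  + by left; congr lpt; lra.
  + by right; left; congr lpt; lra.
  + by right; right; congr lpt; lra.
- rewrite deckF_lpt up_tri_lpt /in_up => [[k1 [k2 k3]]].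
  move: h1 h2 h3; rewrite ?mulr0z => h1 h2 h3.
  set c := al - 3 * be; set d := 1 - 2 * al.
  have hc : c%:~R <= u by rewrite /c; push_intr; lra.
  have hd : d%:~R <= v by rewrite /d; push_intr; lra.
  have hcd : u + v <= (c + d + 1)%:~R by rewrite /c /d; push_intr; lra.
  case: (lerP 1 c) => ic.
    have : 1 <= c%:~R :> R by rewrite (_ : 1 = 1%:~R) // ler_int.
    by move=> ?; right; left; congr lpt; lra.
  case: (lerP 1 d) => id.
    have : 1 <= d%:~R :> R by rewrite (_ : 1 = 1%:~R) // ler_int.
    by move=> ?; right; right; congr lpt; lra.
  have : c + d + 1 <= 0 by rewrite /c /d in ic id *; lia.
  rewrite -(ler_int R) => h; move: hcd; rewrite intrD => hcd.
  by left; congr lpt; lra.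
Qed.

Lemma tri0_tri3_vtx z : tri 0 z -> tri 3 z -> exists2 k, (k < 3)%N & z = vtx k.
Proof.
move=> [p hp <-] [q hq] /projP /Kequiv_sym H.
have [->|[->|->]] := tri0_tri3_lattice hp hq H.
- by exists 0%N => //; have := lpt_sixth 0 0; rewrite mulr0z => ->; apply/proj_sixthP.
- by exists 1%N => //; have := lpt_sixth 1 0; rewrite mulr0z mulr1z => ->; apply/proj_sixthP.
- by exists 2%N => //; have := lpt_sixth 0 1; rewrite mulr0z mulr1z => ->; apply/proj_sixthP.
Qed.

(** * Tessellation-preserving isometries *)

Lemma tileK_tri i : tileK (tri i).
Proof. by exists (up_tri (tri_a i) (tri_b i)); split => //; exists (tri_a i), (tri_b i); left. Qed.

Lemma tileK_triP (Y : set (Kpt R)) : tileK Y -> exists2 j, (j < 6)%N & Y = tri j.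
Proof.
case=> D [[a [b [->|->]]] ->].
- by exists (tri_idx a b); [exact: tri_idx_lt | exact: proj_up_tri].
- by exists (dtri_idx a b); [exact: tri_idx_lt | exact: proj_down_tri].
Qed.

Definition tri_action F (sg : nat -> nat) :=
  forall i, (i < 6)%N -> (sg i < 6)%N /\ F @` tri i = tri (sg i).
Definition vtx_action F (pi : nat -> nat) :=
  forall k, (k < 3)%N -> (pi k < 3)%N /\ F (vtx k) = vtx (pi k).

Section TessIsometry.
Variable F : Kpt R -> Kpt R.
Hypothesis HF : tess_isometry F.

Lemma tess_bij : bijective F. Proof. by case: HF => [[]]. Qed.
Lemma tess_distK a b : distK (F a) (F b) = distK a b. Proof. by case: HF => [[]]. Qed.
Lemma tess_inj : injective F. Proof. exact: bij_inj tess_bij. Qed.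

Lemma tri_action_ex : exists sg, tri_action F sg.
Proof.
have H i : exists j, (i < 6)%N -> (j < 6)%N /\ F @` tri i = tri j.
  by case: HF => _ /(_ _ (tileK_tri i)) /tileK_triP [j hj E]; exists j.
by have [sg Hsg] := choice H; exists sg.
Qed.

Variable sg : nat -> nat.
Hypothesis Hsg : tri_action F sg.

Lemma sg_lt i : (i < 6)%N -> (sg i < 6)%N. Proof. by move/Hsg => []. Qed.
Lemma sg_tri i : (i < 6)%N -> F @` tri i = tri (sg i). Proof. by move/Hsg => []. Qed.

Lemma sg_inj i j : (i < 6)%N -> (j < 6)%N -> sg i = sg j -> i = j.
Proof.
move=> hi hj E; apply: tri_inj => //; apply: funext => z.
by rewrite -(image_inj (A := tri i) tess_inj) (sg_tri hi) E -(sg_tri hj) (image_inj tess_inj).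
Qed.

Lemma sg_surj j : (j < 6)%N -> exists2 i, (i < 6)%N & sg i = j.
Proof. by apply: ltn_inj_surj; [exact: sg_lt | exact: sg_inj]. Qed.

(* Vertices are exactly the common points of two triangles, e.g. of the
   preimages of [tri 0] and [tri 3]. *)
Lemma tess_vtx k : (k < 3)%N -> exists2 k', (k' < 3)%N & F (vtx k) = vtx k'.
Proof.
move=> hk; have [i0 h0 e0] := sg_surj (erefl : (0 < 6)%N).
have [i3 h3 e3] := sg_surj (erefl : (3 < 6)%N).
apply: tri0_tri3_vtx.
- by rewrite -e0 -sg_tri //; exists (vtx k) => //; apply: tri_vtx.
- by rewrite -e3 -sg_tri //; exists (vtx k) => //; apply: tri_vtx.
Qed.

Lemma vtx_action_ex : exists pi, vtx_action F pi.
Proof.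
have H k : exists k', (k < 3)%N -> (k' < 3)%N /\ F (vtx k) = vtx k'.
  case: (ltnP k 3) => hk; last by exists 0%N => h; exfalso; lia.
  by have [k' h1 h2] := tess_vtx hk; exists k'.
by have [pi Hpi] := choice H; exists pi.
Qed.

Variable pi : nat -> nat.
Hypothesis Hpi : vtx_action F pi.

Lemma pi_lt k : (k < 3)%N -> (pi k < 3)%N. Proof. by move/Hpi => []. Qed.
Lemma pi_vtx k : (k < 3)%N -> F (vtx k) = vtx (pi k). Proof. by move/Hpi => []. Qed.

Lemma pi_inj k k' : (k < 3)%N -> (k' < 3)%N -> pi k = pi k' -> k = k'.
Proof. by move=> hk hk' E; apply: vtx_inj => //; apply: tess_inj; rewrite !pi_vtx // E. Qed.

Lemma pi_surj k : (k < 3)%N -> exists2 k', (k' < 3)%N & pi k' = k.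
Proof. by apply: ltn_inj_surj; [exact: pi_lt | exact: pi_inj]. Qed.

Lemma tess_edge_mid i k : (i < 6)%N -> (k < 3)%N ->
  F (proj (edge_mid i k)) = proj (edge_mid (sg i) (pi k)).
Proof.
move=> hi hk; apply: edge_mid_unique; [exact: sg_lt | exact: pi_lt | |].
- by rewrite -sg_tri //; exists (proj (edge_mid i k)) => //; exists (edge_mid i k); [apply: edge_mid_in_tri|].
- move=> _ /pi_surj [k' hk' <-] hne; rewrite -pi_vtx // tess_distK.
  by apply: distK_edge_mid => // E; apply: hne; rewrite E.
Qed.

Lemma sg_adj i k : (i < 6)%N -> (k < 3)%N -> sg (adj i k) = adj (sg i) (pi k).
Proof.
move=> hi hk; have hn := adj_lt hi hk.
have E : proj (edge_mid (sg i) (pi k)) = proj (edge_mid (sg (adj i k)) (pi k)).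
  by rewrite -!tess_edge_mid // -edge_mid_adj.
have [|//] := edge_mid_eq (sg_lt hi) (sg_lt hn) (pi_lt hk) E.
by move/(sg_inj hn hi)/(adj_neq hi hk).
Qed.

End TessIsometry.

(* A point of a triangle is located by its distances to the three vertices. *)
Lemma tess_isometry_eq F1 F2 sg pi : tess_isometry F1 -> tess_isometry F2 ->
  tri_action F1 sg -> tri_action F2 sg -> vtx_action F1 pi -> vtx_action F2 pi ->
  F1 = F2.
Proof.
move=> T1 T2 S1 S2 P1 P2; apply: funext => z.
have [p ->] := proj_surj z; have [i hi hX] := tri_cover p.
apply: (tri_eq_distK_vtx (i := sg i)); first exact: (sg_lt S1).
- by rewrite -(sg_tri S1) //; exists (proj p).
- by rewrite -(sg_tri S2) //; exists (proj p).
- move=> k hk; have [k' hk' <-] := pi_surj T1 P1 hk.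
  by rewrite -{1}(pi_vtx P1) // -(pi_vtx P2) // !tess_distK.
Qed.

(* For a vertex permutation [pi], [orient_rev (pi 0) (pi 1)] says that [pi]
   reverses the cyclic order of the vertices; the affine maps realizing [pi]
   send [tri 0] to [tri0_image (orient_rev (pi 0) (pi 1)) (pi 0) a],
   [a = 0, 1]. *)
Definition orient_rev (w0 w1 : nat) : bool := w1 != ((w0 + 1) %% 3)%N.
Definition tri0_image (rev : bool) (c a : nat) : nat :=
  if rev then dtri_idx (c%:Z + a%:Z - 1) (a%:Z - 1) else tri_idx (c%:Z + a%:Z) a%:Z.

(* The triangle permutation determined, through [sg_adj], by [pi] and the
   image [s0] of [tri 0]: every triangle is reached from [tri 0] by at most
   two adjacency steps. *)
Definition tri_perm_of (pi : nat -> nat) (s0 i : nat) : nat :=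
  match i with
  | 0 => s0 | 1 => adj s0 (pi 1) | 2 => adj s0 (pi 0) | 3 => adj (adj s0 (pi 0)) (pi 1)
  | 4 => adj s0 (pi 2) | _ => adj (adj s0 (pi 1)) (pi 0) end%N.

Definition adj_compatible (pi : nat -> nat) (s0 : nat) : bool :=
  all (fun i => all (fun k =>
    tri_perm_of pi s0 (adj i k) == adj (tri_perm_of pi s0 i) (pi k)) (iota 0 3)) (iota 0 6).

Definition nat3 (x0 x1 x2 k : nat) : nat := match k with 0 => x0 | 1 => x1 | _ => x2 end%N.

Fact tri0_image_subproof : all (fun x0 => all (fun x1 => all (fun x2 => all (fun s0 =>
  uniq [:: x0; x1; x2] && adj_compatible (nat3 x0 x1 x2) s0 ==>
  (s0 == tri0_image (orient_rev x0 x1) x0 0) || (s0 == tri0_image (orient_rev x0 x1) x0 1))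
  (iota 0 6)) (iota 0 3)) (iota 0 3)) (iota 0 3).
Proof. by []. Qed.

Fact tri0_image_neq_subproof : all (fun x0 => all (fun x1 =>
  (tri0_image (orient_rev x0 x1) x0 0 < 6)%N && (tri0_image (orient_rev x0 x1) x0 1 < 6)%N &&
  (tri0_image (orient_rev x0 x1) x0 0 != tri0_image (orient_rev x0 x1) x0 1)) (iota 0 3)) (iota 0 3).
Proof. by []. Qed.

Section AdjacencyRigidity.
Variables sg pi : nat -> nat.
Hypothesis sg_lt6 : forall i, (i < 6)%N -> (sg i < 6)%N.
Hypothesis pi_lt3 : forall k, (k < 3)%N -> (pi k < 3)%N.
Hypothesis pi_inj3 : forall k k', (k < 3)%N -> (k' < 3)%N -> pi k = pi k' -> k = k'.
Hypothesis sg_adjE : forall i k, (i < 6)%N -> (k < 3)%N -> sg (adj i k) = adj (sg i) (pi k).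

Lemma sg_tri_perm_of i : (i < 6)%N -> sg i = tri_perm_of pi (sg 0) i.
Proof.
case: i => [|[|[|[|[|[|//]]]]]] _ //=.
- by rewrite -(@sg_adjE 0 1 erefl erefl).
- by rewrite -(@sg_adjE 0 0 erefl erefl).
- by rewrite -(@sg_adjE 0 0 erefl erefl) -(@sg_adjE 2 1 erefl erefl).
- by rewrite -(@sg_adjE 0 2 erefl erefl).
- by rewrite -(@sg_adjE 0 1 erefl erefl) -(@sg_adjE 1 0 erefl erefl).
Qed.

Lemma sg0_tri0_image :
  sg 0 = tri0_image (orient_rev (pi 0) (pi 1)) (pi 0) 0 \/
  sg 0 = tri0_image (orient_rev (pi 0) (pi 1)) (pi 0) 1.
Proof.
have hc : adj_compatible (nat3 (pi 0) (pi 1) (pi 2)) (sg 0).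
  apply/iota_allP => i hi; apply/iota_allP => k hk.
  have -> : nat3 (pi 0) (pi 1) (pi 2) k = pi k by case: k hk => [|[|[|]]].
  change (tri_perm_of pi (sg 0) (adj i k) == adj (tri_perm_of pi (sg 0) i) (pi k)).
  by rewrite -!sg_tri_perm_of ?adj_lt ?sg_adjE.
have hu : uniq [:: pi 0; pi 1; pi 2].
  rewrite /= !inE !andbT; apply/andP; split; [apply/norP; split|];
  by apply/eqP => /pi_inj3; move=> /(_ erefl erefl).
have /iota_allP/(_ _ (pi_lt3 (erefl : 0 < 3)%N))/iota_allP/(_ _ (pi_lt3 (erefl : 1 < 3)%N))
     /iota_allP/(_ _ (pi_lt3 (erefl : 2 < 3)%N))/iota_allP/(_ _ (sg_lt6 (erefl : 0 < 6)%N))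
  := tri0_image_subproof.
by rewrite hu hc => /orP [] /eqP; [left | right].
Qed.

End AdjacencyRigidity.

(** * Integral affine maps *)

Definition aff (rev : bool) (j n : int) p : pt :=
  if rev then lpt (j%:~R - ucoord p) (n%:~R - vcoord p)
  else lpt (ucoord p + j%:~R) (vcoord p + n%:~R).

Definition orient_sign (rev : bool) : int := if rev then -1 else 1.

Lemma aff_lpt rev j n (u v : R) :
  aff rev j n (lpt u v) =
  if rev then lpt (j%:~R - u) (n%:~R - v) else lpt (u + j%:~R) (v + n%:~R).
Proof. by rewrite /aff ucoord_lpt vcoord_lpt. Qed.

Lemma aff_deck rev j n e a b p : exists e' a' b',
  aff rev j n (deck e a b p) = deck e' a' b' (aff rev j n p).
Proof.
rewrite -(lptK p); case: rev; case: e; rewrite ?deckF_lpt ?deckT_lpt !aff_lpt.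
- by exists true, (n - a - 1), (- b - 1); rewrite deckT_lpt; congr lpt; push_intr; lra.
- by exists false, (- a), (- b); rewrite deckF_lpt; congr lpt; push_intr; lra.
- by exists true, (a + n), b; rewrite deckT_lpt; congr lpt; push_intr; lra.
- by exists false, a, b; rewrite deckF_lpt; congr lpt; push_intr; lra.
Qed.

Lemma Kequiv_aff rev j n p q : Kequiv p q -> Kequiv (aff rev j n p) (aff rev j n q).
Proof.
move/KequivE => [e [a [b ->]]]; have [e' [a' [b' ->]]] := aff_deck rev j n e a b p.
exact: Kequiv_deck.
Qed.

Lemma dist2_aff rev j n p q : dist2 (aff rev j n p) (aff rev j n q) = dist2 p q.
Proof.
rewrite -(lptK p) -(lptK q) !aff_lpt.
by case: rev; rewrite !dist2_lpt; congr Num.sqrt; rewrite /qf; ring.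
Qed.

Definition aff_inv_shift (rev : bool) (j : int) : int := if rev then j else - j.

Lemma affK rev j n : cancel (aff rev j n) (aff rev (aff_inv_shift rev j) (aff_inv_shift rev n)).
Proof. by move=> p; rewrite -(lptK p); case: rev; rewrite /aff_inv_shift !aff_lpt; congr lpt; push_intr; lra. Qed.

Lemma affKV rev j n : cancel (aff rev (aff_inv_shift rev j) (aff_inv_shift rev n)) (aff rev j n).
Proof. by move=> p; rewrite -(lptK p); case: rev; rewrite /aff_inv_shift !aff_lpt; congr lpt; push_intr; lra. Qed.

Lemma image_aff rev j n (D : set pt) :
  aff rev j n @` D = [set p | D (aff rev (aff_inv_shift rev j) (aff_inv_shift rev n) p)].
Proof.
apply/seteqP; split => p.
- by case=> q hq <-; rewrite /= affK.
- by move=> /= h; exists (aff rev (aff_inv_shift rev j) (aff_inv_shift rev n) p); rewrite ?affKV.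
Qed.

Lemma aff_up_tri rev j n a b : aff rev j n @` up_tri a b =
  if rev then down_tri (j - a - 1) (n - b - 1) else up_tri (a + j) (b + n).
Proof.
rewrite image_aff; apply/seteqP; case: rev; split => p /=;
  rewrite -(lptK p) /aff_inv_shift ?ucoord_lpt ?vcoord_lpt ?up_tri_lpt ?down_tri_lpt /in_up /in_down;
  push_intr; move=> [h1 [h2 h3]]; do 2! (split; first lra); lra.
Qed.

Lemma aff_down_tri rev j n a b : aff rev j n @` down_tri a b =
  if rev then up_tri (j - a - 1) (n - b - 1) else down_tri (a + j) (b + n).
Proof.
rewrite image_aff; apply/seteqP; case: rev; split => p /=;
  rewrite -(lptK p) /aff_inv_shift ?ucoord_lpt ?vcoord_lpt ?up_tri_lpt ?down_tri_lpt /in_up /in_down;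
  push_intr; move=> [h1 [h2 h3]]; do 2! (split; first lra); lra.
Qed.

Definition Krepr (z : Kpt R) : pt := projT1 (cid (proj_surj z)).

Lemma KreprK z : proj (Krepr z) = z.
Proof. by rewrite /Krepr; case: cid => p /= ->. Qed.

Definition kaff rev j n (z : Kpt R) : Kpt R := proj (aff rev j n (Krepr z)).

Lemma kaff_proj rev j n p : kaff rev j n (proj p) = proj (aff rev j n p).
Proof. by rewrite /kaff; apply/projP/Kequiv_aff/projP; rewrite KreprK. Qed.

Lemma kaff_bij rev j n : bijective (kaff rev j n).
Proof.
exists (kaff rev (aff_inv_shift rev j) (aff_inv_shift rev n)) => z;
by have [p ->] := proj_surj z; rewrite !kaff_proj ?affK ?affKV.
Qed.

Lemma distK_kaff rev j n z w : distK (kaff rev j n z) (kaff rev j n w) = distK z w.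
Proof.
have [p ->] := proj_surj z; have [q ->] := proj_surj w; rewrite !kaff_proj /distK /=.
congr inf; apply/seteqP; split => d [p' [q' [/= hp [hq ->]]]].
- exists (aff rev (aff_inv_shift rev j) (aff_inv_shift rev n) p').
  exists (aff rev (aff_inv_shift rev j) (aff_inv_shift rev n) q').
  split; first by rewrite -{1}(affK rev j n p); apply: Kequiv_aff.
  split; first by rewrite -{1}(affK rev j n q); apply: Kequiv_aff.
  by rewrite dist2_aff.
- exists (aff rev j n p'), (aff rev j n q'); split; first exact: Kequiv_aff.
  by split; [exact: Kequiv_aff | rewrite dist2_aff].
Qed.

Lemma kaff_image rev j n (D : set pt) :
  kaff rev j n @` ((@proj R) @` D) = (@proj R) @` (aff rev j n @` D).
Proof.
apply/seteqP; split => z.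
- by case=> _ [p hp <-] <-; rewrite kaff_proj; exists (aff rev j n p) => //; exists p.
- by case=> _ [p hp <-] <-; exists (proj p); [exists p | rewrite kaff_proj].
Qed.

Lemma kaff_tess rev j n : tess_isometry (kaff rev j n).
Proof.
split; first by split; [exact: kaff_bij | exact: distK_kaff].
move=> Y [D [[a [b [->|->]]] ->]]; rewrite kaff_image ?aff_up_tri ?aff_down_tri.
- exists (if rev then down_tri (j - a - 1) (n - b - 1) else up_tri (a + j) (b + n)); split => //.
  by case: rev; [exists (j - a - 1), (n - b - 1); right | exists (a + j), (b + n); left].
- exists (if rev then up_tri (j - a - 1) (n - b - 1) else down_tri (a + j) (b + n)); split => //.
  by case: rev; [exists (j - a - 1), (n - b - 1); left | exists (a + j), (b + n); right].
Qed.

Lemma kaff_comp rev1 j1 n1 rev2 j2 n2 (z : Kpt R) :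
  kaff rev1 j1 n1 (kaff rev2 j2 n2 z) =
  kaff (rev1 (+) rev2) (j1 + orient_sign rev1 * j2) (n1 + orient_sign rev1 * n2) z.
Proof.
have [p ->] := proj_surj z; rewrite !kaff_proj; congr proj.
rewrite -(lptK p) /orient_sign; case: rev1; case: rev2;
  rewrite /aff /= ?ucoord_lpt ?vcoord_lpt; congr lpt; push_intr; lra.
Qed.

(* [kaff] only depends on the translation part modulo the deck translations. *)
Lemma kaff_eq rev (j n j' n' : int) :
  (exists t r : int, n' - n = 2 * t /\ j' - j + t = 3 * r) -> kaff rev j n = kaff rev j' n'.
Proof.
move=> [t [r [h1 h2]]]; apply: funext => z; have [p ->] := proj_surj z; rewrite !kaff_proj.
apply/projP; have -> : aff rev j' n' p = deck false t r (aff rev j n p); last exact: Kequiv_deck.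
have e1 : (n'%:~R : R) = n%:~R + 2 * t%:~R.
  by have := congr1 (fun x : int => (x%:~R : R)) h1; push_intr => ?; lra.
have e2 : (j'%:~R : R) = j%:~R - t%:~R + 3 * r%:~R.
  by have := congr1 (fun x : int => (x%:~R : R)) h2; push_intr => ?; lra.
by rewrite -(lptK p); case: rev; rewrite !aff_lpt deckF_lpt; congr lpt; lra.
Qed.

(** * The isomorphism *)

Definition permn (w : 'S_3) (k : nat) : nat := w (inord k).

Lemma permn_lt w k : (permn w k < 3)%N.
Proof. exact: ltn_ord. Qed.

Lemma permn_inj w k k' : (k < 3)%N -> (k' < 3)%N -> permn w k = permn w k' -> k = k'.
Proof. by move=> hk hk' /val_inj /perm_inj /(congr1 (@nat_of_ord 3)); rewrite !inordK. Qed.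

Lemma permnM (w1 w2 : 'S_3) k : (k < 3)%N -> permn (w2 * w1)%g k = permn w1 (permn w2 k).
Proof. by move=> hk; rewrite /permn permM inord_val. Qed.

Lemma orient_sign_rev (x0 x1 : nat) : (x0 < 3)%N -> (x1 < 3)%N -> x0 <> x1 ->
  (3 %| x1%:Z - x0%:Z - orient_sign (orient_rev x0 x1))%Z.
Proof.
move=> h0 h1 hne; rewrite /orient_sign /orient_rev; case: eqP => E /=.
- by apply/dvdzP; exists ((x1%:Z - x0%:Z - 1) %/ 3)%Z; subst x1; lia.
- by apply/dvdzP; exists ((x1%:Z - x0%:Z + 1) %/ 3)%Z; lia.
Qed.

(* Every permutation of [Z/3] is affine. *)
Lemma permn_affine (w : 'S_3) k : (k < 3)%N ->
  (3 %| (permn w k)%:Z - orient_sign (orient_rev (permn w 0) (permn w 1)) * k%:Z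
        - (permn w 0)%:Z)%Z.
Proof.
move=> hk; have h0 := permn_lt w 0; have h1 := permn_lt w 1; have h2 := permn_lt w 2.
have d01 : permn w 0 <> permn w 1 by move/permn_inj => /(_ erefl erefl).
have d02 : permn w 0 <> permn w 2 by move/permn_inj => /(_ erefl erefl).
have d12 : permn w 1 <> permn w 2 by move/permn_inj => /(_ erefl erefl).
move: (orient_sign_rev h0 h1 d01); case: (orient_rev _ _) => /= /dvdzP [r hr]; apply/dvdzP;
case: k hk => [|[|[|//]]] _.
- by exists 0; lia.
- by exists r; lia.
- by exists (2 - (permn w 0)%:Z - r); lia.
- by exists 0; lia.
- by exists r; lia.
- by exists (- (permn w 0)%:Z - r); lia.
Qed.

Lemma orient_revM (wa wb : 'S_3) :
  orient_rev (permn wa (permn wb 0)) (permn wa (permn wb 1)) =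
  orient_rev (permn wa 0) (permn wa 1) (+) orient_rev (permn wb 0) (permn wb 1).
Proof.
have ea0 := permn_affine wa (permn_lt wb 0); have ea1 := permn_affine wa (permn_lt wb 1).
have eb := permn_affine wb (erefl : (1 < 3)%N).
have hx : permn wa (permn wb 0) <> permn wa (permn wb 1).
  by move/(permn_inj (permn_lt _ _) (permn_lt _ _))/permn_inj => /(_ erefl erefl).
move: ea0 ea1 eb (orient_sign_rev (permn_lt _ _) (permn_lt _ _) hx); rewrite /orient_sign.
by case: (orient_rev (permn wa 0) _); case: (orient_rev (permn wb 0) _);
  case: (orient_rev _ _) => //= /dvdzP [r1 h1] /dvdzP [r2 h2] /dvdzP [r3 h3] /dvdzP [r4 h4]; lia.
Qed.

Lemma perm3_of_fun (f : nat -> nat) : (forall k, (k < 3)%N -> (f k < 3)%N) ->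
  (forall k k', (k < 3)%N -> (k' < 3)%N -> f k = f k' -> k = k') ->
  exists w : 'S_3, forall k, (k < 3)%N -> permn w k = f k.
Proof.
move=> hf hinj.
have inj : injective (fun x : 'I_3 => (inord (f x) : 'I_3)).
  move=> x y /(congr1 (@nat_of_ord 3)); rewrite !inordK ?hf // => /hinj h.
  by apply: val_inj; apply: h.
by exists (perm inj) => k hk; rewrite /permn permE /= !inordK ?hf.
Qed.

Definition kaff_of (a : nat) (w : 'S_3) : Kpt R -> Kpt R :=
  kaff (orient_rev (permn w 0) (permn w 1)) ((permn w 0)%:Z + a%:Z) a%:Z.

Lemma kaff_of_tess a w : tess_isometry (kaff_of a w).
Proof. exact: kaff_tess. Qed.

Lemma kaff_of_vtx a w k : (k < 3)%N -> kaff_of a w (vtx k) = vtx (permn w k).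
Proof.
move=> hk; move: (permn_affine w hk).
rewrite (vtx_lpt hk) /kaff_of kaff_proj aff_lpt /orient_sign.
case: (orient_rev _ _) => /dvdzP [r hr].
- rewrite (_ : lpt _ _ = lpt ((permn w 0)%:Z + a%:Z - k%:Z)%:~R (a%:Z)%:~R); last first.
    by congr lpt; push_intr; rewrite ?mulr0z; lra.
  by apply: proj_lpt_vtx (permn_lt w k) _; apply/dvdzP; exists (- r); lia.
- rewrite (_ : lpt _ _ = lpt (k%:Z + (permn w 0)%:Z + a%:Z)%:~R (a%:Z)%:~R); last first.
    by congr lpt; push_intr; rewrite ?mulr0z; lra.
  by apply: proj_lpt_vtx (permn_lt w k) _; apply/dvdzP; exists (- r); lia.
Qed.

Lemma kaff_of_tri0 a w :
  kaff_of a w @` tri 0 = tri (tri0_image (orient_rev (permn w 0) (permn w 1)) (permn w 0) a).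
Proof.
rewrite /tri /kaff_of kaff_image aff_up_tri /tri0_image; case: (orient_rev _ _).
- by rewrite proj_down_tri (_ : tri_a 0 = 0) // (_ : tri_b 0 = 0) // ?subr0.
- by rewrite proj_up_tri (_ : tri_a 0 = 0) // (_ : tri_b 0 = 0) // ?add0r.
Qed.

Definition phi (g : 'Z_2 * 'S_3) : Kpt R -> Kpt R := kaff_of g.1 (g.2)^-1%g.

Lemma phi_morph (a b : 'Z_2 * 'S_3) :
  phi ((a.1 + b.1)%R, (a.2 * b.2)%g) = (phi a \o phi b)%FUN.
Proof.
rewrite /phi /= invgM /kaff_of; set wa := (a.2)^-1%g; set wb := (b.2)^-1%g.
rewrite !permnM // orient_revM; apply: funext => z /=; rewrite kaff_comp.
congr (_ z); apply: kaff_eq; change (Zp_trunc 2).+2 with 2%N.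
move: (permn_affine wa (permn_lt wb 0)) => /dvdzP [r hr].
set A := (a.1 : nat); set B := (b.1 : nat); set AB := ((A + B) %% 2)%N.
have hA : (A < 2)%N := ltn_ord a.1.
have hB : (B < 2)%N := ltn_ord b.1.
move: hr; rewrite /orient_sign; case: (orient_rev _ _) => /= hr.
- by exists ((A%:Z - B%:Z - AB%:Z) %/ 2)%Z, (((A%:Z - B%:Z - AB%:Z) %/ 2)%Z - r); split; lia.
- by exists ((A%:Z + B%:Z - AB%:Z) %/ 2)%Z, (((A%:Z + B%:Z - AB%:Z) %/ 2)%Z - r); split; lia.
Qed.

Lemma phi_inj : injective phi.
Proof.
move=> [a s] [b t] E.
have Hw k : (k < 3)%N -> permn s^-1 k = permn t^-1 k.
  move=> hk; apply: vtx_inj; try exact: permn_lt.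
  by have := congr1 (fun f => f (vtx k)) E; rewrite /phi /= !kaff_of_vtx.
have Est : s = t.
  apply: invg_inj; apply/permP => x; apply: val_inj.
  by have := Hw x (ltn_ord x); rewrite /permn inord_val.
subst t; congr pair.
have := congr1 (fun f => f @` tri 0) E; rewrite /= /phi /= !kaff_of_tri0.
set w := s^-1%g.
have /andP [/andP [ha hb] hne] := iota_all2 tri0_image_neq_subproof (permn_lt w 0) (permn_lt w 1).
move=> /tri_inj E'; apply: val_inj => /=.
move: E' hne; case: (nat_of_ord a) (ltn_ord a) => [|[|//]] _;
  case: (nat_of_ord b) (ltn_ord b) => [|[|//]] _ // E'; rewrite E' ?eqxx //.
Qed.

Lemma tess_isometry_phi (F : Kpt R -> Kpt R) : tess_isometry F -> exists g, F = phi g.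
Proof.
move=> HF; have [sg Hsg] := tri_action_ex HF; have [pi Hpi] := vtx_action_ex HF Hsg.
have Hadj := sg_adj HF Hsg Hpi.
have [w Hw] := perm3_of_fun (pi_lt Hpi) (pi_inj HF Hpi).
suff [a ->] : exists a : 'Z_2, F = kaff_of a w by exists (a, w^-1%g); rewrite /phi invgK.
have Hpi' a : vtx_action (kaff_of a w) pi.
  by move=> k hk; split; [exact: (pi_lt Hpi hk) | rewrite kaff_of_vtx // (Hw k hk)].
have sg0_image a : sg 0 = tri0_image (orient_rev (pi 0) (pi 1)) (pi 0) a -> F = kaff_of a w.
  move=> Ea; have T := kaff_of_tess a w; have [sg' Hsg'] := tri_action_ex T.
  have E0 : sg' 0 = sg 0.
    apply: tri_inj; [exact: (sg_lt Hsg') | exact: (sg_lt Hsg) |].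
    by rewrite -(sg_tri Hsg') // kaff_of_tri0 (Hw 0%N erefl) (Hw 1%N erefl) -Ea.
  apply: (tess_isometry_eq HF T Hsg _ Hpi (Hpi' a)) => i hi.
  rewrite (sg_tri_perm_of Hadj hi) -E0 -(sg_tri_perm_of (sg_adj T Hsg' (Hpi' a)) hi).
  exact: Hsg'.
have [] := sg0_tri0_image (sg_lt Hsg) (pi_lt Hpi) (pi_inj HF Hpi) Hadj => E.
- by exists 0%R; apply: sg0_image.
- by exists 1%R; apply: sg0_image.
Qed.

End Klein.

Theorem proposition4p7 (R : realType) :
  exists phi : 'Z_2 * 'S_3 -> (Kpt R -> Kpt R),
    injective phi /\
    (forall F : Kpt R -> Kpt R, tess_isometry F <-> exists g, F = phi g) /\
    (forall a b : 'Z_2 * 'S_3,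
        phi ((a.1 + b.1)%R, (a.2 * b.2)%g) = (phi a \o phi b)%FUN).
Proof.
exists (@phi R); split; first exact: phi_inj.
split; last exact: phi_morph.
move=> F; split; first exact: tess_isometry_phi.
by case=> g ->; apply: kaff_of_tess.
Qed.
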